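(* In the algebra $\mathcal A$, the quantum superdeterminant $\mathcal D_h = a d^{-1} - \beta d^{-1}\gamma d^{-1}$ commutes with each of the generators $a,\beta,\gamma,d$.
   Context: Let $h$ be an odd (Grassmann) parameter with $h^2=0$. Throughout, even elements commute with everything and odd elements anticommute with each other. Let $\mathcal A$ be the associative $\mathbb Z_2$-graded algebra generated by even invertible elements $a,d$ and odd elements $\beta,\gamma$ (with $h$ commuting with $a,d$ and anticommuting with $\beta,\gamma$), subject to the relations $a\beta=\beta a$, $a\gamma=\gamma a+h a^2(1-\mathcal D_h^{-1})$, $d\beta=\beta d$, $d\gamma=\gamma d+h d^2(\mathcal D_h-1)$, $\beta^2=0$, $\gamma^2=h\gamma d(1-\mathcal D_h)$, $\beta\gamma=-\gamma\beta+h\beta d(1-\mathcal D_h)$, $ad=da+h\beta d(\mathcal D_h-1)$, where $\mathcal D_h=ad^{-1}-\beta d^{-1}\gamma d^{-1}$ is assumed invertible. This algebra is called the quantum supergroup $GL_h(1|1)$, with $T=\begin{pmatrix} a&\beta\\ \gamma& d\end{pmatrix}$. *)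

From HB Require Import structures.
From mathcomp Require Import all_boot all_order all_algebra.
Set Implicit Arguments. Unset Strict Implicit. Unset Printing Implicit Defensive.
Import GRing.Theory.
Local Open Scope ring_scope.

Definition qsdet (R : unitRingType) (a beta gamma d : R) : R :=
  a * d^-1 - beta * d^-1 * gamma * d^-1.

(* The defining relations of GL_h(1|1), with h the odd Grassmann parameter,
   holding for elements a beta gamma d h of a ring R. *)
Definition GLh11_rel (R : unitRingType) (h a beta gamma d : R) : Prop :=
  let D := qsdet a beta gamma d in
  [/\ [/\ a \is a GRing.unit, d \is a GRing.unit & D \is a GRing.unit],
      [/\ h * h = 0, h * a = a * h, h * d = d * h,
          h * beta = - (beta * h) & h * gamma = - (gamma * h)],
      [/\ a * beta = beta * a,
          a * gamma = gamma * a + h * a ^+ 2 * (1 - D^-1),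
          d * beta = beta * d,
          d * gamma = gamma * d + h * d ^+ 2 * (D - 1) &
          a * d = d * a + h * beta * d * (D - 1)] &
      [/\ beta * beta = 0,
          gamma * gamma = h * gamma * d * (1 - D) &
          beta * gamma = - (gamma * beta) + h * beta * d * (1 - D)]].

From Stdlib Require Import Ncring Ncring_tac.
From mathcomp Require Import all_boot all_algebra.
Import GRing.Theory.
Local Open Scope ring_scope.

(* Let g = d^-1.  Conjugating the relations by d shows that g commutes with beta
   and h, and commutes with a and gamma up to terms with a left factor h.  For gamma the
   key facts are gamma g gamma = 0 and that, once multiplied by the nilpotent
   odd h, the generators supercommute; hence h a^2 D^-1 = h (a d + beta gamma)
   can be computed as in the classical Berezinian.  Finally
   a = D d + beta g gamma, and D commutes with every factor on the right. *)

(* Instances enabling Stdlib's [non_commutative_ring] on MathComp rings. *)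
#[local] Instance mathcomp_Ring_ops (R : pzRingType) :
  @Ring_ops R 0 1 +%R *%R (fun x y => x - y) -%R eq := {}.

#[local] Instance mathcomp_Ring (R : pzRingType) :
  @Ring R 0 1 +%R *%R (fun x y => x - y) -%R eq (mathcomp_Ring_ops R).
Proof.
split; rewrite /eq_notation /add_notation /mul_notation /sub_notation
  /zero_notation /one_notation /opp_notation //=.
- exact: eq_equivalence.
- by move=> x y -> z w ->.
- by move=> x y -> z w ->.
- by move=> x y -> z w ->.
- by move=> x y ->.
- exact: add0r.
- exact: addrC.
- exact: addrA.
- exact: mul1r.
- exact: mulr1.
- exact: mulrA.
- exact: mulrDl.
- by move=> x y z; exact: (mulrDr z x y).
- exact: subrr.
Qed.

Section GLh11.
Variables (R : unitRingType) (h a beta gamma d : R).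
Local Notation D := (qsdet a beta gamma d).

Hypotheses (d_unit : d \is a GRing.unit) (D_unit : D \is a GRing.unit).
Hypotheses (hh : h * h = 0) (ha : h * a = a * h) (hd : h * d = d * h)
  (hbeta : h * beta = - (beta * h)) (hgamma : h * gamma = - (gamma * h)).
Hypotheses (a_beta : a * beta = beta * a)
  (a_gamma : a * gamma = gamma * a + h * a ^+ 2 * (1 - D^-1))
  (d_beta : d * beta = beta * d)
  (d_gamma : d * gamma = gamma * d + h * d ^+ 2 * (D - 1))
  (a_d : a * d = d * a + h * beta * d * (D - 1)).
Hypotheses (beta_beta : beta * beta = 0)
  (gamma_gamma : gamma * gamma = h * gamma * d * (1 - D))
  (beta_gamma : beta * gamma = - (gamma * beta) + h * beta * d * (1 - D)).

Lemma beta_h : beta * h = - (h * beta).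
Proof. by rewrite hbeta opprK. Qed.

Lemma gamma_h : gamma * h = - (h * gamma).
Proof. by rewrite hgamma opprK. Qed.

Lemma invd_beta : d^-1 * beta = beta * d^-1.
Proof. exact/esym/commrV. Qed.

Lemma invd_h : d^-1 * h = h * d^-1.
Proof. exact/esym/commrV. Qed.

Lemma gamma_d : gamma * d = d * gamma - h * d ^+ 2 * (D - 1).
Proof. by rewrite d_gamma addrK. Qed.

Lemma d_a : d * a = a * d - h * beta * d * (D - 1).
Proof. by rewrite a_d addrK. Qed.

Lemma gamma_a : gamma * a = a * gamma - h * a ^+ 2 * (1 - D^-1).
Proof. by rewrite a_gamma addrK. Qed.

Lemma gamma_beta : gamma * beta = - (beta * gamma) + h * beta * d * (1 - D).
Proof. by rewrite beta_gamma opprD opprK addrNK. Qed.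

Lemma invd_gamma : d^-1 * gamma = gamma * d^-1 - h * d * (D - 1) * d^-1.
Proof.
rewrite -[LHS](mulrK d_unit) -(mulrA _ gamma) gamma_d mulrBr mulrA mulVr // mul1r.
by rewrite expr2 !mulrA invd_h mulrVK // mulrBl.
Qed.

Lemma beta_invd_gamma :
  beta * d^-1 * gamma = beta * gamma * d^-1 + h * beta * d * (D - 1) * d^-1.
Proof.
by rewrite -mulrA invd_gamma mulrBr !mulrA beta_h !mulNr opprK.
Qed.

Lemma qsdet_mul_d : D * d = a - beta * d^-1 * gamma.
Proof. by rewrite /qsdet mulrBl !mulrVK. Qed.

Lemma qsdet_d : D * d = d * D.
Proof.
rewrite qsdet_mul_d beta_invd_gamma.
rewrite [in RHS]/qsdet [in RHS]mulrBr !mulrA d_a d_beta mulrBl !mulrK //.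
by rewrite opprD addrA addrAC.
Qed.

Lemma beta_invd_gamma_beta : beta * d^-1 * gamma * beta = 0.
Proof.
rewrite beta_invd_gamma mulrDl -!mulrA invd_beta !mulrA beta_gamma.
transitivity (- (gamma * (beta * beta) * d^-1)); first by non_commutative_ring.
by rewrite beta_beta mulr0 mul0r oppr0.
Qed.

Lemma qsdet_beta : D * beta = beta * D.
Proof.
rewrite /qsdet mulrBl mulrBr -(mulrA a) invd_beta mulrA a_beta.
rewrite -(mulrA _ _ beta) invd_beta mulrA beta_invd_gamma_beta mul0r.
by rewrite !mulrA beta_beta !mul0r.
Qed.

Lemma gamma_invd_gamma : gamma * d^-1 * gamma = 0.
Proof.
rewrite -mulrA invd_gamma mulrBr !mulrA gamma_gamma gamma_h.
by non_commutative_ring.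
Qed.

Lemma h_a_h : h * a * h = 0.
Proof. by rewrite ha -mulrA hh mulr0. Qed.

Lemma h_beta_h : h * beta * h = 0.
Proof. by rewrite -mulrA beta_h mulrN mulrA hh mul0r oppr0. Qed.

Lemma h_beta_gamma_beta : h * beta * gamma * beta = 0.
Proof.
rewrite -(mulrA h) beta_gamma mulrDr mulrDl !mulrA hh !mul0r addr0.
by rewrite mulrN mulNr -!mulrA beta_beta !mulr0 oppr0.
Qed.

Lemma h_a_d_qsdet : h * a * d * D = h * a * a - h * a * beta * gamma * d^-1.
Proof.
rewrite {1}/qsdet mulrBr !mulrA -(mulrA _ d a) d_a mulrBr !mulrA h_a_h !mul0r.
by rewrite subr0 mulrK // -(mulrA _ d beta) d_beta mulrA mulrK.
Qed.

Lemma h_beta_gamma_qsdet : h * beta * gamma * D = h * a * beta * gamma * d^-1.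
Proof.
rewrite {1}/qsdet mulrBr !mulrA h_beta_gamma_beta !mul0r subr0.
rewrite -(mulrA _ gamma a) gamma_a mulrBr !mulrA h_beta_h !mul0r subr0.
by rewrite -(mulrA h) a_beta mulrA.
Qed.

Lemma h_sq_a_invqsdet : h * a * a * D^-1 = h * a * d + h * beta * gamma.
Proof.
have <- : (h * a * d + h * beta * gamma) * D = h * a * a.
  by rewrite mulrDl h_a_d_qsdet h_beta_gamma_qsdet subrK.
by rewrite mulrK.
Qed.

Lemma h_beta_qsdet : h * beta * D = h * beta * a * d^-1.
Proof.
by rewrite /qsdet mulrBr !mulrA -(mulrA h beta beta) beta_beta mulr0 !mul0r subr0.
Qed.

Lemma h_beta_d_qsdet_invd_gamma :
  h * beta * d * D * d^-1 * gamma = h * a * beta * gamma * d^-1.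
Proof.
rewrite -(mulrA _ d) -qsdet_d mulrA mulrK // h_beta_qsdet.
rewrite -(mulrA _ d^-1) invd_gamma mulrBr !mulrA -(mulrA _ a h) -ha mulrA h_beta_h.
by rewrite !mul0r subr0 -(mulrA h beta a) -a_beta mulrA.
Qed.

Lemma qsdet_gamma : D * gamma = gamma * D.
Proof.
have gamma_invd_gamma_l x : x * gamma * d^-1 * gamma = 0.
  by rewrite -!mulrA (mulrA gamma) gamma_invd_gamma !mulr0.
have -> : D * gamma = (gamma * a + h * a * a * (1 - D^-1)) * d^-1
                      - h * a * d * (D - 1) * d^-1.
  rewrite {1}/qsdet mulrBl gamma_invd_gamma_l subr0 -(mulrA a) invd_gamma.
  by rewrite mulrBr !mulrA -ha a_gamma expr2 mulrA.
have -> : gamma * D = gamma * a * d^-1 - h * beta * d * (1 - D) * d^-1 * gamma * d^-1.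
  rewrite [in LHS]/qsdet mulrBr !mulrA gamma_beta !mulrDl !mulNr.
  by rewrite gamma_invd_gamma_l mul0r oppr0 add0r.
transitivity (gamma * a * d^-1 + (h * a * a - h * a * a * D^-1) * d^-1
              - (h * a * d * D - h * a * d) * d^-1).
  by non_commutative_ring.
rewrite h_sq_a_invqsdet h_a_d_qsdet.
transitivity (gamma * a * d^-1
              - (h * beta * d * d^-1 * gamma - h * beta * d * D * d^-1 * gamma) * d^-1).
  by rewrite mulrK // h_beta_d_qsdet_invd_gamma; non_commutative_ring.
by non_commutative_ring.
Qed.

Lemma qsdet_a : D * a = a * D.
Proof.
have a_eq : D * d + beta * d^-1 * gamma = a by rewrite qsdet_mul_d subrK.
rewrite -{2 3}a_eq; apply: commrD; first exact: commrM (commr_refl D) qsdet_d.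
exact: commrM (commrM qsdet_beta (commrV qsdet_d)) qsdet_gamma.
Qed.

Lemma qsdet_central :
  [/\ D * a = a * D, D * beta = beta * D, D * gamma = gamma * D & D * d = d * D].
Proof. by split; [exact: qsdet_a | exact: qsdet_beta | exact: qsdet_gamma | exact: qsdet_d]. Qed.

End GLh11.

Theorem mainTheorem1 (K : fieldType) (R : unitAlgType K)
    (charK : [pchar K] =i pred0) (h a beta gamma d : R) :
  GLh11_rel h a beta gamma d ->
  let D := qsdet a beta gamma d in
  [/\ D * a = a * D, D * beta = beta * D,
      D * gamma = gamma * D & D * d = d * D].
Proof.
case=> [[_ d_unit D_unit] [hh ha hd hbeta hgamma]
        [a_beta a_gamma d_beta d_gamma a_d] [beta_beta gamma_gamma beta_gamma]] /=.
by apply: (@qsdet_central _ h).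
Qed.
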